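(* For any $n\in\mathbb{N}$, the monoid $\mathrm{rps}_n$ has polynomial growth.
   Context: Let $\mathcal{A}_n=\{1<2<\cdots<n\}$. An rPS tableau is a finite (possibly empty) sequence of nonempty bottom-justified columns of boxes filled with positive integers, such that the entries of each column are weakly decreasing from top to bottom and the bottom entries of the columns form a strictly increasing sequence from left to right. Right insertion of a symbol $a$ into an rPS tableau $B$: if $a$ is strictly greater than every entry of the bottom row, append a new column consisting of $a$ at the right end; otherwise, let $z$ be the leftmost bottom-row entry with $z\geq a$ and put $a$ in a new box at the bottom of the column of $z$ (the previous entries of that column move up one box). For $w=w_1\cdots w_k$, $\mathfrak{R}_r(w)$ is obtained by starting with the empty tableau and right-inserting $w_1,\dots,w_k$ in order. The monoid $\mathrm{rps}_n$ is the quotient of the free monoid $\mathcal{A}_n^*$ by the congruence $u\equiv v\iff\mathfrak{R}_r(u)=\mathfrak{R}_r(v)$. For a monoid $M$ generated by a finite set $\Sigma$, the growth function $\gamma_M(N)$ is the number of elements of $M$ expressible as products of at most $N$ generators; $M$ has polynomial growth if $\gamma_M(N)$ is bounded above by $N^k$ for some $k$ (up to the usual equivalence of growth functions), a notion independent of the finite generating set. *)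

From mathcomp Require Import all_boot.
Set Implicit Arguments. Unset Strict Implicit. Unset Printing Implicit Defensive.

(* An rPS tableau is a sequence of columns (left to right); each column is a
   seq nat listed from BOTTOM to TOP (so the head of a column is its bottom
   entry).  Entries weakly decrease from top to bottom, i.e. a column listed
   bottom-to-top is weakly increasing; bottom entries strictly increase left
   to right. *)
Definition column := seq nat.
Definition tableau := seq column.

Definition is_rPS (B : tableau) : Prop :=
  all (fun c => (c != [::]) && sorted leq c) B /\
  sorted ltn [seq head 0 c | c <- B].

Fixpoint rins (B : tableau) (a : nat) : tableau :=
  match B with
  | [::] => [:: [:: a]]
  | c :: B' => if a <= head 0 c then (a :: c) :: B' else c :: rins B' a
  end.

Definition Rr (w : seq nat) : tableau := foldl rins [::] w.

Definition word_over (n : nat) (w : seq nat) : bool :=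
  all (fun a => (1 <= a) && (a <= n)) w.

Definition rps_equiv (u v : seq nat) : Prop := Rr u = Rr v.

Fixpoint words (n m : nat) : seq (seq nat) :=
  match m with
  | 0 => [:: [::]]
  | m'.+1 => [seq a :: w | a <- iota 1 n, w <- words n m']
  end.

Definition words_upto (n N : nat) : seq (seq nat) :=
  flatten [seq words n m | m <- iota 0 N.+1].

(* Growth function of rps_n w.r.t. its natural generating set A_n: the number
   of elements of rps_n expressible as products of at most N generators.
   Elements of rps_n are classes of rps_equiv, which are in bijection with
   the values of Rr, so we count distinct values Rr w over such words. *)
Definition gamma_rps (n N : nat) : nat :=
  size (undup [seq Rr w | w <- words_upto n N]).

(* Polynomial growth: gamma(N) <= C * N^k for all N >= 1 (this is exactly
   gamma being dominated by N |-> N^k in the usual growth preorder). *)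
Definition polynomial_growth (gamma : nat -> nat) : Prop :=
  exists k C : nat, forall N : nat, 0 < N -> gamma N <= C * N ^ k.

From mathcomp Require Import all_boot.
Set Implicit Arguments. Unset Strict Implicit.

(* Right insertion only permutes the letters of the word into an rPS tableau,
   so R_r(w) has |w| entries, all in A_n.  Its bottom entries are distinct
   letters, so it has at most n columns, and each column, being sorted, is
   determined by how often each value i <= n occurs in it.  Hence an
   element of length at most N is determined by the number of columns and an
   n x (n+1) matrix of multiplicities in [0, N], which leaves at most
   (n+1) (N+1)^(n(n+1)) elements: a polynomial bound. *)

Notation bottoms B := [seq head 0 c | c <- B].

Lemma path_bottoms_rins (B : tableau) (a x : nat) :
  x < a -> path ltn x (bottoms B) -> path ltn x (bottoms (rins B a)).
Proof.
elim: B x => [|c B IH] x xa /=; first by rewrite xa.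
case/andP=> xc pB; case: ifP => ac /=; last by rewrite xc IH // ltnNge ac.
rewrite xa; case: B pB {IH} => [|c' B] //= /andP [cc' ->].
by rewrite (leq_ltn_trans ac cc').
Qed.

Lemma sorted_bottoms_rins (B : tableau) (a : nat) :
  sorted ltn (bottoms B) -> sorted ltn (bottoms (rins B a)).
Proof.
case: B => [|c B] //=; case: ifP => [ac | /negbT]; last first.
  by rewrite -ltnNge; exact: path_bottoms_rins.
by case: B => [|c' B] //= /andP [cc' ->]; rewrite (leq_ltn_trans ac cc').
Qed.

Lemma rins_rPS (B : tableau) (a : nat) : is_rPS B -> is_rPS (rins B a).
Proof.
case=> hcols hbot; split; last exact: sorted_bottoms_rins.
elim: B hcols {hbot} => [|c B IH] //= /andP [/andP [c0 sc] hB].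
case: ifP => ac /=; last by rewrite c0 sc IH.
by rewrite hB andbT; case: c c0 sc ac => [|y c] //= _ -> ->.
Qed.

Lemma perm_rins (B : tableau) (a : nat) :
  perm_eq (flatten (rins B a)) (a :: flatten B).
Proof.
elim: B => [|c B IH] //=; case: ifP => _ //=.
by rewrite perm_sym -cat1s perm_catCA perm_cat2l perm_sym.
Qed.

Lemma perm_foldl_rins (B : tableau) (w : seq nat) :
  perm_eq (flatten (foldl rins B w)) (flatten B ++ w).
Proof.
elim: w B => [|a w IH] B /=; first by rewrite cats0.
apply: perm_trans (IH _) _.
by rewrite perm_sym -cat1s perm_catCA catA perm_cat2r perm_sym perm_rins.
Qed.

Lemma perm_Rr (w : seq nat) : perm_eq (flatten (Rr w)) w.
Proof. exact: perm_foldl_rins. Qed.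

Lemma Rr_rPS (w : seq nat) : is_rPS (Rr w).
Proof.
rewrite /Rr; have : is_rPS [::] by [].
by elim: w [::] => [|a w IH] //= B /(rins_rPS a) /IH.
Qed.

Lemma count_column_le (T : tableau) (c : column) (x : nat) :
  c \in T -> count_mem x c <= size (flatten T).
Proof.
case/splitPr=> T1 T2; apply: leq_trans (count_size _ c) _.
by rewrite flatten_cat size_cat /= size_cat addnCA leq_addr.
Qed.

Lemma word_over_column (n : nat) (T : tableau) (c : column) :
  word_over n (flatten T) -> c \in T -> word_over n c.
Proof.
move=> /allP hT cT; apply/allP => x xc.
by apply: hT; apply/flattenP; exists c.
Qed.

Lemma size_rPS_le (n : nat) (B : tableau) :
  is_rPS B -> word_over n (flatten B) -> size B <= n.
Proof.
case=> /allP hcols hbot hw.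
have ubot : uniq (bottoms B) by exact: sorted_uniq ltn_trans ltnn _ hbot.
suff sub : {subset bottoms B <= iota 1 n}.
  by rewrite -(size_map (head 0)) -(size_iota 1 n) uniq_leq_size.
move=> _ /mapP [c cB ->].
case: c cB (hcols _ cB) => [|x c] // cB _.
have /andP [x1 xn] := allP (word_over_column hw cB) x (mem_head x c).
by rewrite mem_iota x1 add1n ltnS.
Qed.

Lemma perm_eq_count_le (n : nat) (s t : seq nat) :
  word_over n s -> word_over n t ->
  (forall i, i <= n -> count_mem i s = count_mem i t) -> perm_eq s t.
Proof.
(* [perm_eq s t] only compares multiplicities of the letters of [s ++ t]. *)
move=> /allP hs /allP ht hcount; apply/allP => x /=.
rewrite mem_cat => /orP [/hs | /ht] /andP [_ xn]; exact/eqP/hcount.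
Qed.

Section Encoding.

Variables n N : nat.

Definition small_rPS (T : tableau) : Prop :=
  [/\ is_rPS T, word_over n (flatten T) & size (flatten T) <= N].

Definition rPS_code (T : tableau) : 'I_n.+1 * {ffun 'I_n * 'I_n.+1 -> 'I_N.+1} :=
  (inord (size T),
   [ffun ji : 'I_n * 'I_n.+1 => inord (count_mem (ji.2 : nat) (nth [::] T ji.1))]).

Lemma Rr_small (w : seq nat) :
  size w <= N -> word_over n w -> small_rPS (Rr w).
Proof.
move=> wN ww; have pw := perm_Rr w.
by split; [exact: Rr_rPS | rewrite /word_over (perm_all _ pw) | rewrite (perm_size pw)].
Qed.

Lemma rPS_code_inj (T T' : tableau) :
  small_rPS T -> small_rPS T' -> rPS_code T = rPS_code T' -> T = T'.
Proof.
move=> [rT wT NT] [rT' wT' NT'] [/(congr1 (@nat_of_ord _))].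
have [nT nT'] := (size_rPS_le rT wT, size_rPS_le rT' wT').
rewrite !inordK ?ltnS // => eq_size /ffunP eq_counts.
apply: (eq_from_nth (x0 := [::]) eq_size) => j jT.
have jT' : j < size T' by rewrite -eq_size.
have [cT cT'] := (mem_nth [::] jT, mem_nth [::] jT').
have [_ sT] := andP (allP rT.1 _ cT); have [_ sT'] := andP (allP rT'.1 _ cT').
apply: (sorted_eq leq_trans anti_leq sT sT').
apply: (perm_eq_count_le (word_over_column wT cT) (word_over_column wT' cT')).
move=> i ilen.
have := eq_counts (Ordinal (leq_trans jT nT), Ordinal (ilen : i < n.+1)).
rewrite !ffunE => /(congr1 (@nat_of_ord _)).
by rewrite !inordK ?ltnS ?(leq_trans (count_column_le i cT) NT)
  ?(leq_trans (count_column_le i cT') NT').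
Qed.

End Encoding.

Lemma mem_words (n m : nat) (w : seq nat) :
  w \in words n m -> size w = m /\ word_over n w.
Proof.
elim: m w => [|m IH] w /=; first by rewrite inE => /eqP ->.
case/allpairsP => [[a w'] [/= ha /IH [<- ww'] ->]].
by split=> //=; rewrite ww' andbT; move: ha; rewrite mem_iota add1n ltnS.
Qed.

Lemma mem_words_upto (n N : nat) (w : seq nat) :
  w \in words_upto n N -> size w <= N /\ word_over n w.
Proof.
by case/flatten_mapP => m; rewrite mem_iota add0n ltnS => mN /mem_words [-> ->].
Qed.

Lemma gamma_rps_le (n N : nat) : gamma_rps n N <= n.+1 * N.+1 ^ (n * n.+1).
Proof.
rewrite /gamma_rps; set S := undup _.
have small_S T : T \in S -> small_rPS n N T.
  by rewrite mem_undup => /mapP [w /mem_words_upto [wN ww] ->]; exact: Rr_small.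
have inj : {in S &, injective (rPS_code n N)}.
  by move=> T T' /small_S sT /small_S sT'; exact: rPS_code_inj.
have /card_uniqP card_S : uniq (map (rPS_code n N) S).
  by rewrite (map_inj_in_uniq inj) undup_uniq.
rewrite -(size_map (rPS_code n N)) -card_S.
by apply: leq_trans (max_card _) _; rewrite card_prod card_ffun card_prod !card_ord.
Qed.

Theorem theorem4p3 (n : nat) : polynomial_growth (gamma_rps n).
Proof.
exists (n * n.+1), (n.+1 * 2 ^ (n * n.+1)) => N N_gt0.
apply: leq_trans (gamma_rps_le n N) _.
rewrite -mulnA leq_mul2l -expnMn mul2n -addnn; apply/orP; right.
by elim: (n * n.+1) => // k IH; rewrite !expnS leq_mul // -addn1 leq_add2l.
Qed.
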